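(* Let $m,n\ge 1$, $M=\{1,\dots,m\}$, $N=\{1,\dots,n\}$. (i) For BQAP1 with data $Q=(q_{ijk\ell})$ ($m\times n\times m\times n$) and $m\times n$ matrices $c,d$, the average $\mathcal{A}_1(Q,c,d)$ of the objective value $f_1(x,y)$ over all feasible solutions equals $$\mathcal{A}_1(Q,c,d)=\frac{1}{mn}\sum_{i=1}^m\sum_{j=1}^n\sum_{k=1}^m\sum_{\ell=1}^n q_{ijk\ell}+\frac{1}{n}\sum_{i=1}^m\sum_{j=1}^n c_{ij}+\frac{1}{m}\sum_{i=1}^m\sum_{j=1}^n d_{ij}.$$ (ii) For BQAP2 with data $Q=(q_{ijk\ell})$ ($m\times m\times n\times n$), an $m\times m$ matrix $c$ and an $n\times n$ matrix $d$, the average $\mathcal{A}_2(Q,c,d)$ of $f_2(x,y)$ over all feasible solutions equals $$\mathcal{A}_2(Q,c,d)=\frac{1}{mn}\sum_{i=1}^m\sum_{j=1}^m\sum_{k=1}^n\sum_{\ell=1}^n q_{ijk\ell}+\frac{1}{m}\sum_{i=1}^m\sum_{j=1}^m c_{ij}+\frac{1}{n}\sum_{i=1}^n\sum_{j=1}^n d_{ij}.$$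
   Context: BQAP1: the feasible solutions are pairs $(x,y)$ of $m\times n$ 0-1 matrices with $\sum_{j=1}^n x_{ij}=1$ for every $i\in M$ and $\sum_{i=1}^m y_{ij}=1$ for every $j\in N$ (there are $n^m m^n$ of them); the objective is $f_1(x,y)=\sum_{i,k\in M}\sum_{j,\ell\in N} q_{ijk\ell}x_{ij}y_{k\ell}+\sum_{i\in M,j\in N}c_{ij}x_{ij}+\sum_{i\in M,j\in N}d_{ij}y_{ij}$. BQAP2: feasible solutions are pairs $(x,y)$ with $x$ an $m\times m$ 0-1 matrix satisfying $\sum_{j=1}^m x_{ij}=1$ for all $i\in M$ and $y$ an $n\times n$ 0-1 matrix satisfying $\sum_{i=1}^n y_{ij}=1$ for all $j\in N$ (there are $m^m n^n$ of them); the objective is $f_2(x,y)=\sum_{i,j\in M}\sum_{k,\ell\in N} q_{ijk\ell}x_{ij}y_{k\ell}+\sum_{i,j\in M}c_{ij}x_{ij}+\sum_{i,j\in N}d_{ij}y_{ij}$. All data are real numbers. *)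

From HB Require Import structures.
From mathcomp Require Import all_boot all_order all_algebra.
Set Implicit Arguments. Unset Strict Implicit. Unset Printing Implicit Defensive.
Import Order.TTheory GRing.Theory Num.Theory.
Local Open Scope ring_scope.

(* 0-1 matrices are represented as boolean matrices; entry x i j is read as
   the number (x i j)%:R in {0,1}.  Indices 'I_m play the role of M = {1..m}. *)

Definition row_assign (p q : nat) (x : 'M[bool]_(p, q)) : bool :=
  [forall i : 'I_p, (\sum_(j < q) nat_of_bool (x i j) == 1)%N].

Definition col_assign (p q : nat) (y : 'M[bool]_(p, q)) : bool :=
  [forall j : 'I_q, (\sum_(i < p) nat_of_bool (y i j) == 1)%N].

Definition feas1 (m n : nat) (s : 'M[bool]_(m, n) * 'M[bool]_(m, n)) : bool :=
  row_assign s.1 && col_assign s.2.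

Definition f1 (R : numFieldType) (m n : nat)
  (q : 'I_m -> 'I_n -> 'I_m -> 'I_n -> R) (c d : 'M[R]_(m, n))
  (x y : 'M[bool]_(m, n)) : R :=
  \sum_(i < m) \sum_(k < m) \sum_(j < n) \sum_(l < n)
      q i j k l * (x i j)%:R * (y k l)%:R
  + \sum_(i < m) \sum_(j < n) c i j * (x i j)%:R
  + \sum_(i < m) \sum_(j < n) d i j * (y i j)%:R.

Definition avg1 (R : numFieldType) (m n : nat)
  (q : 'I_m -> 'I_n -> 'I_m -> 'I_n -> R) (c d : 'M[R]_(m, n)) : R :=
  (\sum_(s | feas1 s) f1 q c d s.1 s.2) / (#|[pred s | @feas1 m n s]|)%:R.

Definition feas2 (m n : nat) (s : 'M[bool]_m * 'M[bool]_n) : bool :=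
  row_assign s.1 && col_assign s.2.

Definition f2 (R : numFieldType) (m n : nat)
  (q : 'I_m -> 'I_m -> 'I_n -> 'I_n -> R) (c : 'M[R]_m) (d : 'M[R]_n)
  (x : 'M[bool]_m) (y : 'M[bool]_n) : R :=
  \sum_(i < m) \sum_(j < m) \sum_(k < n) \sum_(l < n)
      q i j k l * (x i j)%:R * (y k l)%:R
  + \sum_(i < m) \sum_(j < m) c i j * (x i j)%:R
  + \sum_(i < n) \sum_(j < n) d i j * (y i j)%:R.

Definition avg2 (R : numFieldType) (m n : nat)
  (q : 'I_m -> 'I_m -> 'I_n -> 'I_n -> R) (c : 'M[R]_m) (d : 'M[R]_n) : R :=
  (\sum_(s | feas2 s) f2 q c d s.1 s.2) / (#|[pred s | @feas2 m n s]|)%:R.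

From mathcomp Require Import all_boot all_order all_algebra.
From mathcomp Require Import perm ring.
Import Order.TTheory GRing.Theory Num.Theory.
Set Implicit Arguments. Unset Strict Implicit. Unset Printing Implicit Defensive.
Local Open Scope ring_scope.

(* The feasible set is a product X * Y, so the average of x_ij y_kl splits as
   (average of x_ij over X) * (average of y_kl over Y).  Permuting columns
   preserves X, so the average of x_ij does not depend on j; as each row of x
   sums to 1, it is 1/(number of columns).  Transposition turns Y into the
   corresponding set of row assignments, so the average of y_kl is
   1/(number of rows). *)

Section Average.
Variable R : numFieldType.

Definition average (T : finType) (P : pred T) (F : T -> R) : R :=
  (\sum_(x | P x) F x) / #|[pred x | P x]|%:R.

Lemma averageE (T : finType) (P : pred T) (F : T -> R) :
  average P F = (\sum_(x | P x) F x) / \sum_(x | P x) 1.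
Proof. by rewrite /average; congr (_ / _); rewrite sumr_const. Qed.

Lemma eq_average (T : finType) (P Q : pred T) (F G : T -> R) :
  P =1 Q -> (forall x, P x -> F x = G x) -> average P F = average Q G.
Proof. by move=> PQ FG; rewrite !averageE (eq_big _ _ PQ FG) (eq_bigl _ _ PQ). Qed.

Lemma averageD (T : finType) (P : pred T) (F G : T -> R) :
  average P (fun x => F x + G x) = average P F + average P G.
Proof. by rewrite /average big_split mulrDl. Qed.

Lemma averageZ (T : finType) (P : pred T) (a : R) (F : T -> R) :
  average P (fun x => a * F x) = a * average P F.
Proof. by rewrite /average -mulr_sumr mulrA. Qed.

Lemma average_sum (I : Type) (r : seq I) (Q : pred I) (T : finType) (P : pred T)
    (F : I -> T -> R) :
  average P (fun x => \sum_(i <- r | Q i) F i x) = \sum_(i <- r | Q i) average P (F i).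
Proof. by rewrite /average exchange_big mulr_suml. Qed.

Lemma average_cst (T : finType) (P : pred T) (a : R) :
  (exists x, P x) -> average P (fun=> a) = a.
Proof.
case=> x0 Px0; rewrite averageE -(eq_bigr _ (fun _ _ => mulr1 a)) -mulr_sumr.
by rewrite mulfK // sumr_const pnatr_eq0 -lt0n; apply/card_gt0P; exists x0.
Qed.

Lemma average_reindex (T T' : finType) (h : T' -> T) (P : pred T) (F : T -> R) :
  bijective h -> average P F = average (fun x => P (h x)) (fun x => F (h x)).
Proof.
move=> [g hK gK].
have onh : {on [pred x | P x], bijective h} by exists g => x _; [apply: hK | apply: gK].
by rewrite !averageE (reindex h onh) (reindex h onh).
Qed.

Lemma average_pair (T1 T2 : finType) (P1 : pred T1) (P2 : pred T2)
    (F : T1 -> R) (G : T2 -> R) :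
  average (fun s : T1 * T2 => P1 s.1 && P2 s.2) (fun s => F s.1 * G s.2)
  = average P1 F * average P2 G.
Proof.
rewrite !averageE /= -(pair_big_dep P1 (fun=> P2) (fun x y => F x * G y)).
rewrite -(pair_big_dep P1 (fun=> P2) (fun _ _ => 1)) /=.
have -> : \sum_(x | P1 x) \sum_(y | P2 y) 1
          = (\sum_(x | P1 x) 1) * \sum_(y | P2 y) (1 : R).
  by rewrite mulr_suml; under [RHS]eq_bigr do rewrite mul1r.
by rewrite -big_distrlr /= invfM mulrACA.
Qed.

Lemma average_fst (T1 T2 : finType) (P1 : pred T1) (P2 : pred T2) (F : T1 -> R) :
  (exists y, P2 y) ->
  average (fun s : T1 * T2 => P1 s.1 && P2 s.2) (fun s => F s.1) = average P1 F.
Proof.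
move=> P2y; rewrite -[RHS]mulr1 -(average_cst 1 P2y) -average_pair.
by apply: eq_average => // s _; rewrite mulr1.
Qed.

Lemma average_snd (T1 T2 : finType) (P1 : pred T1) (P2 : pred T2) (G : T2 -> R) :
  (exists x, P1 x) ->
  average (fun s : T1 * T2 => P1 s.1 && P2 s.2) (fun s => G s.2) = average P2 G.
Proof.
move=> P1x; rewrite -[RHS]mul1r -(average_cst 1 P1x) -average_pair.
by apply: eq_average => // s _; rewrite mul1r.
Qed.

End Average.

Lemma row_assign_col_perm (p q : nat) (s : {perm 'I_q}) (x : 'M[bool]_(p, q)) :
  row_assign (col_perm s x) = row_assign x.
Proof.
apply: eq_forallb => i; congr (_ == _).
under eq_bigr do rewrite mxE.
by rewrite (reindex_inj (@perm_inj _ s^-1)); under eq_bigr do rewrite permKV.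
Qed.

Lemma col_assign_trmx (p q : nat) (x : 'M[bool]_(q, p)) : col_assign x^T = row_assign x.
Proof. by apply: eq_forallb => i; under eq_bigr do rewrite mxE. Qed.

Lemma row_assign_exists (p q : nat) :
  (0 < q)%N -> exists x : 'M[bool]_(p, q), row_assign x.
Proof.
move=> q_gt0; pose j0 := Ordinal q_gt0.
exists (\matrix_(i, j) (j == j0)); apply/forallP => i.
rewrite (bigD1 j0) //= mxE eqxx big1 // => j /negbTE.
by rewrite mxE => ->.
Qed.

Lemma col_assign_exists (p q : nat) :
  (0 < p)%N -> exists y : 'M[bool]_(p, q), col_assign y.
Proof.
by case/(row_assign_exists q)=> x x_row; exists x^T; rewrite col_assign_trmx.
Qed.

Lemma average_row_assign_entry (R : numFieldType) (p q : nat) (i : 'I_p) (j : 'I_q) :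
  (0 < q)%N ->
  average (@row_assign p q) (fun x : 'M[bool]_(p, q) => (x i j)%:R) = q%:R^-1 :> R.
Proof.
move=> q_gt0; set a := average _ _.
have a_indep j' : average (@row_assign p q) (fun x : 'M[bool]_(p, q) => (x i j')%:R) = a.
  have bij : bijective (@col_perm bool p q (tperm j j')).
    by exists (col_perm (tperm j j')) => x; apply/matrixP => k l; rewrite !mxE tpermK.
  rewrite (average_reindex _ _ bij); apply: eq_average => [x | x _].
    exact: row_assign_col_perm.
  by rewrite mxE tpermR.
have : average (@row_assign p q) (fun x => \sum_(j' < q) ((x i j')%:R : R)) = 1.
  rewrite -[RHS](@average_cst _ _ (@row_assign p q) 1); last exact: row_assign_exists.
  apply: eq_average => // x /forallP /(_ i) /eqP row_x.
  by rewrite -natr_sum row_x.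
rewrite average_sum (eq_bigr _ (fun j' _ => a_indep j')) sumr_const card_ord => a_q.
have q_neq0 : q%:R != 0 :> R by rewrite pnatr_eq0 -lt0n.
by rewrite -[a](mulfK q_neq0) mulr_natr a_q mul1r.
Qed.

Lemma average_col_assign_entry (R : numFieldType) (p q : nat) (i : 'I_p) (j : 'I_q) :
  (0 < p)%N ->
  average (@col_assign p q) (fun y : 'M[bool]_(p, q) => (y i j)%:R) = p%:R^-1 :> R.
Proof.
move=> p_gt0.
have bij : bijective (@trmx bool q p) by exists (@trmx bool p q) => x; rewrite trmxK.
rewrite (average_reindex _ _ bij) -(average_row_assign_entry R j i p_gt0).
by apply: eq_average => [x | x _]; rewrite ?col_assign_trmx ?mxE.
Qed.

Lemma avg1_formula (R : numFieldType) (m n : nat) (hm : (0 < m)%N) (hn : (0 < n)%N)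
    (q : 'I_m -> 'I_n -> 'I_m -> 'I_n -> R) (c d : 'M[R]_(m, n)) :
  avg1 q c d =
    (m * n)%:R^-1 * (\sum_(i < m) \sum_(j < n) \sum_(k < m) \sum_(l < n) q i j k l)
    + n%:R^-1 * (\sum_(i < m) \sum_(j < n) c i j)
    + m%:R^-1 * (\sum_(i < m) \sum_(j < n) d i j).
Proof.
have [x0 x0_row] := row_assign_exists m hn.
have [y0 y0_col] := col_assign_exists n hm.
rewrite [avg1 _ _ _](_ : _ = average (fun s => row_assign s.1 && col_assign s.2)
                                      (fun s => f1 q c d s.1 s.2)) //.
rewrite /f1 !averageD; congr (_ + _ + _).
- rewrite average_sum mulr_sumr; apply: eq_bigr => i _.
  rewrite [X in _ = _ * X]exchange_big /=.
  rewrite average_sum mulr_sumr; apply: eq_bigr => k _.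
  rewrite average_sum mulr_sumr; apply: eq_bigr => j _.
  rewrite average_sum mulr_sumr; apply: eq_bigr => l _.
  rewrite (average_pair _ _ (fun x : 'M[bool]_(m, n) => q i j k l * (x i j)%:R)
                        (fun y : 'M[bool]_(m, n) => (y k l)%:R)).
  rewrite averageZ average_row_assign_entry // average_col_assign_entry //.
  by rewrite natrM invfM; ring.
- rewrite average_sum mulr_sumr; apply: eq_bigr => i _.
  rewrite average_sum mulr_sumr; apply: eq_bigr => j _.
  rewrite (average_fst _ (fun x : 'M[bool]_(m, n) => c i j * (x i j)%:R));
    last by exists y0.
  by rewrite averageZ average_row_assign_entry // mulrC.
- rewrite average_sum mulr_sumr; apply: eq_bigr => i _.
  rewrite average_sum mulr_sumr; apply: eq_bigr => j _.
  rewrite (average_snd _ (fun y : 'M[bool]_(m, n) => d i j * (y i j)%:R));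
    last by exists x0.
  by rewrite averageZ average_col_assign_entry // mulrC.
Qed.

Lemma avg2_formula (R : numFieldType) (m n : nat) (hm : (0 < m)%N) (hn : (0 < n)%N)
    (q : 'I_m -> 'I_m -> 'I_n -> 'I_n -> R) (c : 'M[R]_m) (d : 'M[R]_n) :
  avg2 q c d =
    (m * n)%:R^-1 * (\sum_(i < m) \sum_(j < m) \sum_(k < n) \sum_(l < n) q i j k l)
    + m%:R^-1 * (\sum_(i < m) \sum_(j < m) c i j)
    + n%:R^-1 * (\sum_(i < n) \sum_(j < n) d i j).
Proof.
have [x0 x0_row] := row_assign_exists m hm.
have [y0 y0_col] := col_assign_exists n hn.
rewrite [avg2 _ _ _](_ : _ = average (fun s => row_assign s.1 && col_assign s.2)
                                      (fun s => f2 q c d s.1 s.2)) //.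
rewrite /f2 !averageD; congr (_ + _ + _).
- rewrite average_sum mulr_sumr; apply: eq_bigr => i _.
  rewrite average_sum mulr_sumr; apply: eq_bigr => j _.
  rewrite average_sum mulr_sumr; apply: eq_bigr => k _.
  rewrite average_sum mulr_sumr; apply: eq_bigr => l _.
  rewrite (average_pair _ _ (fun x : 'M[bool]_m => q i j k l * (x i j)%:R)
                        (fun y : 'M[bool]_n => (y k l)%:R)).
  rewrite averageZ average_row_assign_entry // average_col_assign_entry //.
  by rewrite natrM invfM; ring.
- rewrite average_sum mulr_sumr; apply: eq_bigr => i _.
  rewrite average_sum mulr_sumr; apply: eq_bigr => j _.
  rewrite (average_fst _ (fun x : 'M[bool]_m => c i j * (x i j)%:R)); last by exists y0.
  by rewrite averageZ average_row_assign_entry // mulrC.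
- rewrite average_sum mulr_sumr; apply: eq_bigr => i _.
  rewrite average_sum mulr_sumr; apply: eq_bigr => j _.
  rewrite (average_snd _ (fun y : 'M[bool]_n => d i j * (y i j)%:R)); last by exists x0.
  by rewrite averageZ average_col_assign_entry // mulrC.
Qed.

Theorem theorem1 (R : realFieldType) (m n : nat) (hm : (0 < m)%N) (hn : (0 < n)%N) :
  (forall (q : 'I_m -> 'I_n -> 'I_m -> 'I_n -> R) (c d : 'M[R]_(m, n)),
     avg1 q c d =
       (m * n)%:R^-1 * (\sum_(i < m) \sum_(j < n) \sum_(k < m) \sum_(l < n) q i j k l)
       + n%:R^-1 * (\sum_(i < m) \sum_(j < n) c i j)
       + m%:R^-1 * (\sum_(i < m) \sum_(j < n) d i j))
  /\
  (forall (q : 'I_m -> 'I_m -> 'I_n -> 'I_n -> R) (c : 'M[R]_m) (d : 'M[R]_n),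
     avg2 q c d =
       (m * n)%:R^-1 * (\sum_(i < m) \sum_(j < m) \sum_(k < n) \sum_(l < n) q i j k l)
       + m%:R^-1 * (\sum_(i < m) \sum_(j < m) c i j)
       + n%:R^-1 * (\sum_(i < n) \sum_(j < n) d i j)).
Proof. by split=> q c d; [apply: avg1_formula | apply: avg2_formula]. Qed.
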